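(* Let $T_M>0$ and $c>0$. Let $f\in C^2(\mathbb R_+)\cap C_b(\mathbb R_+)$ be a solution of $$f''(y)-cf'(y)-f^4(y)=-\int_0^\infty E(y-\eta)f^4(\eta)\,d\eta\ (y>0),\qquad f(0)=T_M,\qquad f\ge 0,$$ with $|f|\le T_M$. Then $f(y)<T_M$ for all $y>0$ and $\partial_yf(0^+)<0$.
   Context: $E(x)=\frac12\int_{|x|}^\infty\frac{e^{-t}}{t}dt$; $\mathbb R_+=[0,\infty)$; $C_b$ denotes bounded continuous functions. *)

From HB Require Import structures.
From mathcomp Require Import all_boot all_order all_algebra.
From mathcomp Require Import all_classical all_reals all_analysis.
Set Implicit Arguments. Unset Strict Implicit. Unset Printing Implicit Defensive.
Import Order.TTheory GRing.Theory Num.Theory.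
Import numFieldNormedType.Exports.
Local Open Scope classical_set_scope.
Local Open Scope ring_scope.

(* E(x) = 1/2 \int_{|x|}^\infty e^{-t}/t dt  (Lebesgue integral; at x = 0 the
   integral is +oo and [fine] returns 0, irrelevant since {0} is null). *)
Definition Ekernel (R : realType) (x : R) : R :=
  2^-1 * fine (\int[@lebesgue_measure R]_(t in `]`|x|, +oo[) (expR (- t) / t)%:E).

Definition Eterm (R : realType) (f : R -> R) (y : R) : \bar R :=
  \int[@lebesgue_measure R]_(eta in `[0, +oo[) (Ekernel (y - eta) * f eta ^+ 4)%:E.

(* E = E_1(|.|)/2, where E_1 is the exponential integral.  Its primitive
   P(t) = t E_1(t) - e^(-t) increases from -1 to 0, so splitting at y gives
   int_0^oo E(y - s) ds = 1 + P(y)/2 <= 1 - E_1(y + 1)/2.  As 0 <= f <= T_M,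
   the equation then yields
     f'' >= c f' + f^4 - T_M^4 + T_M^4 E_1(y + 1)/2.
   At an interior point with f = T_M we would get f' = 0 and f'' > 0, so f
   would exceed T_M just to the right of it.  At 0, a limit slope l >= 0 would
   likewise make f'' > 0 near 0^+, hence f' > l >= 0 and f > f(0) = T_M there. *)

From HB Require Import structures.
From mathcomp Require Import all_boot all_order all_algebra.
From mathcomp Require Import all_classical all_reals all_analysis.
From mathcomp Require Import measurable_realfun lra.
Set Implicit Arguments. Unset Strict Implicit. Unset Printing Implicit Defensive.
Import Order.TTheory GRing.Theory Num.Theory.
Import numFieldNormedType.Exports.
Local Open Scope classical_set_scope.
Local Open Scope ring_scope.

Section Calculus.
Context {R : realType}.

Lemma derivable1_continuous (f : R -> R) (x : R) :
  derivable f x 1 -> {for x, continuous f}.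
Proof. by move=> /derivable1_diffP/differentiable_continuous. Qed.

Lemma derive1_val (f : R -> R) (x d : R) : is_derive x 1 f d -> derive1 f x = d.
Proof. by move=> fd; rewrite derive1E; exact: derive_val. Qed.

Lemma derivable_cc_LRcontinuous (f : R -> R) (a b : R) : a <= b ->
  (forall x, x \in `[a, b] -> derivable f x 1) -> derivable_oo_LRcontinuous f a b.
Proof.
move=> ab df; split.
- by move=> x /[!in_itv]/= /andP[ax xb]; apply: df; rewrite in_itv/= !ltW.
- by apply/cvg_at_right_filter/derivable1_continuous/df; rewrite in_itv/= lexx.
- by apply/cvg_at_left_filter/derivable1_continuous/df; rewrite in_itv/= lexx ab.
Qed.

Lemma gtr0_derive1_right_lim_lt (g : R -> R) (a l : R) :
  (\forall t \near a^'+, derivable g t 1 /\ 0 < derive1 g t) ->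
  g x @[x --> a^'+] --> l -> \forall t \near a^'+, l < g t.
Proof.
move=> /nbhs_ballP[e /= e0 dg] gl.
have dge t : t \in `]a, a + e[ -> derivable g t 1 /\ 0 < derive1 g t.
  rewrite in_itv/= => /andP[at_ te]; apply: dg => //.
  by rewrite /ball/= ltr_distlC; apply/andP; split; lra.
have incr : {in `]a, a + e[ &, {homo g : x y / x < y}}.
  apply: (@gtr0_derive1_lt_oo _ g a (a + e)).
  - by move=> t /dge [].
  - by move=> t /dge [].
  - by move=> t /set_mem /dge [dt _]; exact: derivable1_continuous.
near=> t.
have at_ : a < t by near: t; exact: nbhs_right_gt.
have te : t < a + e by near: t; apply: nbhs_right_lt; rewrite ltrDl.
have as_ : a < (a + t) / 2 by lra.
have st : (a + t) / 2 < t by lra.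
apply: (@le_lt_trans _ _ (g ((a + t) / 2))); last by apply: incr; rewrite ?in_itv/=; lra.
rewrite -(cvg_lim _ gl)//; apply: limr_le; first by apply/cvg_ex; exists l.
near=> x; apply/ltW/incr; rewrite ?in_itv/=; last by near: x; exact: nbhs_right_lt.
- by apply/andP; split; [near: x; exact: nbhs_right_gt | near: x; apply: nbhs_right_lt; lra].
- lra.
Unshelve. all: by end_near. Qed.

Lemma gtr0_derive2_right_lt (g : R -> R) (a l : R) : 0 <= l ->
  (\forall t \near a^'+, [/\ derivable g t 1, derivable (derive1 g) t 1
                           & 0 < derive1 (derive1 g) t]) ->
  derive1 g x @[x --> a^'+] --> l -> g x @[x --> a^'+] --> g a ->
  \forall t \near a^'+, g a < g t.
Proof.
move=> l0 near_g2 g1l ga; apply: gtr0_derive1_right_lim_lt ga.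
have near_g1 : \forall t \near a^'+, l < derive1 g t.
  by apply: gtr0_derive1_right_lim_lt g1l; apply: filterS near_g2 => t [].
by apply: filterS2 near_g2 near_g1 => t [dg _ _] /(le_lt_trans l0).
Qed.

End Calculus.

Lemma ge0_nondecreasing_set_integral_le (d : measure_display) (T : measurableType d)
    (R : realType) (mu : measure T R) (F : nat -> set T) (f : T -> \bar R) (B : \bar R) :
  {homo F : n m / (n <= m)%N >-> (n <= m)%O} -> (forall n, measurable (F n)) ->
  (forall n, measurable_fun (F n) f) -> (forall n x, F n x -> (0 <= f x)%E) ->
  (forall n, \int[mu]_(x in F n) f x <= B)%E ->
  (\int[mu]_(x in \bigcup_n F n) f x <= B)%E.
Proof.
move=> ndF mF mf f0 FB.
have cvgF := @ge0_nondecreasing_set_cvg_integral _ T R F f mu ndF mF mf f0.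
rewrite -(cvg_lim _ cvgF)//; apply: lime_le; first by apply/cvg_ex; eexists; exact: cvgF.
exact: nearW.
Qed.

Section ExponentialIntegral.
Context {R : realType}.
Notation mu := (@lebesgue_measure R).

Lemma is_derive_expRN (t : R) : is_derive t 1 (fun s => expR (- s)) (- expR (- t)).
Proof.
have := @is_derive1_comp R expR (fun s => - s) t (expR (- t)) (-1).
by rewrite mulrN1; apply; exact: is_deriveNid.
Qed.

Lemma continuous_expRN : continuous (fun t : R => expR (- t)).
Proof. by move=> t; apply: derivable1_continuous; case: (is_derive_expRN t). Qed.

Lemma integral_expRN (x : R) :
  (\int[mu]_(t in `[x, +oo[) (expR (- t))%:E = (expR (- x))%:E)%E.
Proof.
have := @ge0_continuous_FTC2y R (fun t => expR (- t)) (fun t => - expR (- t)) x 0.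
rewrite EFinN sub0e oppeK; apply.
- by move=> t _; exact: expR_ge0.
- exact/continuous_subspaceT/continuous_expRN.
- by rewrite -oppr0; apply: cvgN; exact: cvgr_expR.
- by move=> t _; apply: derivableN; case: (is_derive_expRN t).
- apply/cvg_at_right_filter/(continuousN (f := fun t => expR (- t))).
  exact: continuous_expRN.
- move=> t _; apply: derive1_val.
  by rewrite -[X in is_derive _ _ _ X]opprK; apply: is_deriveN; exact: is_derive_expRN.
Qed.

(* For x <= 0 the integral is not finite and [fine] makes [expint x] zero. *)
Definition expint (x : R) : R :=
  fine (\int[mu]_(t in `]x, +oo[) (expR (- t) / t)%:E).

Lemma expint_integrand_ge0 (t : R) : 0 <= t -> 0 <= expR (- t) / t.
Proof. by move=> t0; rewrite divr_ge0// expR_ge0. Qed.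

Lemma continuous_expint_integrand (t : R) : t != 0 ->
  {for t, continuous (fun s => expR (- s) / s)}.
Proof.
move=> t0; apply: continuousM; first exact: continuous_expRN.
exact: inv_continuous.
Qed.

Lemma measurable_expint_integrand (x : R) : 0 <= x ->
  measurable_fun `]x, +oo[ (fun t => (expR (- t) / t)%:E).
Proof.
move=> x0; apply/measurable_EFinP; apply: open_continuous_measurable_fun.
  exact: interval_open.
move=> t; rewrite inE/= in_itv/= andbT => xt.
by apply: continuous_expint_integrand; rewrite gt_eqF// (le_lt_trans x0 xt).
Qed.

Lemma expint_integral_le (x : R) : 0 < x ->
  (\int[mu]_(t in `]x, +oo[) (expR (- t) / t)%:E <= (expR (- x) / x)%:E)%E.
Proof.
move=> x0; have mexp : measurable_fun `]x, +oo[ (fun t => (expR (- t))%:E).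
  apply/measurable_EFinP; apply: measurable_funS (continuous_measurable_fun _) => //.
  exact: continuous_expRN.
apply: (@le_trans _ _ (\int[mu]_(t in `]x, +oo[) (x^-1%:E * (expR (- t))%:E))%E).
  apply: ge0_le_integral => //.
  - move=> t; rewrite /= in_itv/= andbT => xt.
    by rewrite lee_fin expint_integrand_ge0// ltW// (lt_trans x0 xt).
  - exact: measurable_expint_integrand (ltW x0).
  - exact: measurable_funeM.
  - move=> t; rewrite /= in_itv/= andbT => xt.
    rewrite lee_fin mulrC ler_wpM2r ?expR_ge0//.
    by rewrite lef_pV2 ?posrE ?ltW// (lt_trans x0 xt).
rewrite ge0_integralZl_EFin ?invr_ge0 ?(ltW x0)//.
rewrite integral_itv_obnd_cbnd; last exact: measurable_funS mexp.
by rewrite integral_expRN -EFinM mulrC.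
Qed.

Lemma expint_integral_ge0 (x : R) : 0 <= x ->
  (0 <= \int[mu]_(t in `]x, +oo[) (expR (- t) / t)%:E)%E.
Proof.
move=> x0; apply: integral_ge0 => t; rewrite /= in_itv/= andbT => xt.
by rewrite lee_fin expint_integrand_ge0// ltW// (le_lt_trans x0 xt).
Qed.

Lemma expint_integral_fin_num (x : R) : 0 < x ->
  (\int[mu]_(t in `]x, +oo[) (expR (- t) / t)%:E)%E \is a fin_num.
Proof.
move=> x0; rewrite ge0_fin_numE; last exact: expint_integral_ge0 (ltW x0).
by apply: (le_lt_trans (expint_integral_le x0)); exact: ltry.
Qed.

Lemma EFin_expint (x : R) : 0 < x ->
  (expint x)%:E = (\int[mu]_(t in `]x, +oo[) (expR (- t) / t)%:E)%E.
Proof. by move=> x0; rewrite fineK// expint_integral_fin_num. Qed.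

Lemma expint_ge0 (x : R) : 0 <= x -> 0 <= expint x.
Proof. by move=> x0; apply: fine_ge0; exact: expint_integral_ge0. Qed.

Lemma mulr_expint_le (x : R) : 0 < x -> x * expint x <= expR (- x).
Proof.
move=> x0; rewrite mulrC -ler_pdivlMr// -lee_fin EFin_expint//.
exact: expint_integral_le.
Qed.

Lemma expint_split (a z : R) : 0 < a -> a < z ->
  expint a = (\int[mu]_(t in `]a, z]) (expR (- t) / t))%R + expint z.
Proof.
move=> a0 az; apply: EFin_inj.
rewrite EFinD (EFin_expint a0) (EFin_expint (lt_trans a0 az)).
have g0 t : [set` `]a, +oo[] t -> (0 <= (expR (- t) / t)%:E)%E.
  rewrite /= in_itv/= andbT => at_.
  by rewrite lee_fin expint_integrand_ge0// ltW// (lt_trans a0 at_).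
have mg := measurable_expint_integrand (ltW a0).
have disj : [disjoint `]a, z]%classic & `]z, +oo[%classic].
  rewrite disj_set2E; apply/eqP/seteqP; split => t //=.
  by rewrite !in_itv/= andbT => -[/andP[_ tz] /(le_lt_trans tz)]; rewrite ltxx.
have := expint_integral_fin_num a0.
rewrite !(@itv_bndbnd_setU _ _ (BRight a) (BRight z) +oo%O) ?bnd_simp ?(ltW az)//.
rewrite !ge0_integral_setU//; try by rewrite -itv_bndbnd_setU// bnd_simp ltW.
by rewrite fin_numD => /andP[fin_az _]; rewrite /Rintegral fineK.
Qed.

Lemma is_derive_expint (x : R) : 0 < x -> is_derive x 1 expint (- (expR (- x) / x)).
Proof.
move=> x0; set g := fun t : R => expR (- t) / t.
have x2x : x / 2 < x by rewrite ltr_pdivrMr// ltr_pMr// ltr1n.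
have x20 : 0 < x / 2 by rewrite divr_gt0.
pose G z := (\int[mu]_(t in [set` Interval (BRight (x / 2)) (BRight z)]) g t)%R.
have intG : mu.-integrable [set` Interval (BRight (x / 2)) (BRight (2 * x))] (EFin \o g).
  apply: (@integrableS _ _ _ mu `[x / 2, 2 * x]) => //.
    by move=> t; rewrite /= !in_itv/= => /andP[/ltW -> ->].
  apply: continuous_compact_integrable; first exact: segment_compact.
  apply: continuous_in_subspaceT => t; rewrite inE/= in_itv/= => /andP[x2t _].
  by apply: continuous_expint_integrand; rewrite gt_eqF// (lt_le_trans x20 x2t).
have [|//|/=|dG G'] := @continuous_FTC1 R g (BRight (x / 2)) x (2 * x) _ intG.
- by rewrite ltr_pMl// ltr1n.
- by apply: continuous_expint_integrand; rewrite gt_eqF.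
have isG : is_derive x 1 G (g x) by rewrite -G' derive1E; exact: derivableP.
apply: (@near_eq_is_derive _ _ _ (fun z => expint (x / 2) - G z)).
  near=> z; have x2z : x / 2 < z by near: z; exact: lt_nbhsr.
  by rewrite (expint_split x20 x2z) addrAC subrr add0r.
by rewrite -[X in is_derive _ _ _ X]sub0r; exact: is_deriveB.
Unshelve. all: by end_near. Qed.

Lemma expint_decr (x y : R) : 0 < x -> x < y -> expint y < expint x.
Proof.
move=> x0 xy; have pos t : t \in `[x, y] -> 0 < t.
  by rewrite in_itv/= => /andP[/(lt_le_trans x0)].
apply: (@ltr0_derive1_lt_cc _ _ x y); rewrite ?in_itv/= ?lexx ?(ltW xy)//.
- by move=> t /[!in_itv]/= /andP[xt _]; case: (is_derive_expint (lt_trans x0 xt)).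
- move=> t /[!in_itv]/= /andP[xt _].
  rewrite (derive1_val (is_derive_expint (lt_trans x0 xt))) oppr_lt0.
  by rewrite divr_gt0 ?expR_gt0// (lt_trans x0 xt).
- apply: derivable_within_continuous => t /pos t0.
  by case: (is_derive_expint t0).
Qed.

Lemma expint_gt0 (x : R) : 0 < x -> 0 < expint x.
Proof.
move=> x0; apply: le_lt_trans (expint_ge0 (ltW (ltr_wpDr ler01 x0))) _.
by apply: expint_decr => //; rewrite ltrDl.
Qed.

Definition expint_primitive (t : R) : R := t * expint t - expR (- t).

Lemma is_derive_expint_primitive (t : R) : 0 < t ->
  is_derive t 1 expint_primitive (expint t).
Proof.
move=> t0; have dM := is_deriveM (is_derive_id t 1) (is_derive_expint t0).
apply: is_derive_eq (is_deriveB dM (is_derive_expRN t)) _.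
by rewrite /GRing.scale/= mulr1 mulrN mulrCA divff ?gt_eqF// mulr1 addrAC subrr add0r.
Qed.

Lemma derivable_expint_primitive (t : R) : 0 < t -> derivable expint_primitive t 1.
Proof. by move=> t0; case: (is_derive_expint_primitive t0). Qed.

Lemma expint_primitive_le0 (t : R) : 0 < t -> expint_primitive t <= 0.
Proof. by move=> t0; rewrite subr_le0 mulr_expint_le. Qed.

Lemma expint_primitive_ge (t : R) : 0 <= t -> - expR (- t) <= expint_primitive t.
Proof. by move=> t0; rewrite -[leLHS]add0r lerD2r mulr_ge0// expint_ge0. Qed.

Lemma expint_primitive_le (y : R) : 0 < y -> expint_primitive y <= - expint (y + 1).
Proof.
move=> y0; have yy1 : y < y + 1 by rewrite ltrDl.
have dP t : t \in `]y, y + 1[ -> is_derive t 1 expint_primitive (expint t).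
  by rewrite in_itv/= => /andP[yt _]; exact: is_derive_expint_primitive (lt_trans y0 yt).
have cP : {within `[y, y + 1], continuous expint_primitive}.
  apply: derivable_within_continuous => t /[!in_itv]/= /andP[yt _].
  exact: derivable_expint_primitive (lt_le_trans y0 yt).
have [t /[!in_itv]/= /andP[yt ty1]] := MVT yy1 dP cP.
rewrite [y + 1 - y]addrC addKr mulr1.
have := expint_decr (lt_trans y0 yt) ty1.
have := expint_primitive_le0 (lt_trans y0 yy1).
lra.
Qed.

End ExponentialIntegral.

Section Kernel.
Context {R : realType}.
Notation mu := (@lebesgue_measure R).

Lemma Ekernel_expint (x : R) : Ekernel x = 2^-1 * expint `|x|.
Proof. by []. Qed.

Lemma Ekernel_ge0 (x : R) : 0 <= Ekernel x.
Proof. by rewrite mulr_ge0 ?invr_ge0// expint_ge0. Qed.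

Lemma continuous_Ekernel_shift (y s : R) : s != y ->
  {for s, continuous (fun s => Ekernel (y - s))}.
Proof.
move=> sy; have ys0 : 0 < `|y - s| by rewrite normr_gt0 subr_eq0 eq_sym.
apply: (@continuousM _ _ (cst 2^-1) (fun s => expint `|y - s|)); first exact: cvg_cst.
apply: (continuous_comp (f := fun s => `|y - s|)).
  apply: continuous_comp; last exact: norm_continuous.
  exact: (@continuousB _ _ _ (cst y) id s (cvg_cst y) cvg_id).
by apply: derivable1_continuous; case: (is_derive_expint ys0).
Qed.

Lemma measurable_Ekernel_shift (y : R) :
  measurable_fun [set~ y] (fun s => (Ekernel (y - s))%:E).
Proof.
apply/measurable_EFinP; apply: open_continuous_measurable_fun.
  by rewrite openC; apply: compact_closed; [exact: Rhausdorff|exact: compact_set1].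
by move=> s; rewrite inE/= => /eqP; exact: continuous_Ekernel_shift.
Qed.

Lemma integral_Ekernel_left (y b : R) : 0 < b -> b < y ->
  (\int[mu]_(s in `[0%R, b]) (Ekernel (y - s))%:E =
   (2^-1 * (expint_primitive y - expint_primitive (y - b)))%:E)%E.
Proof.
move=> b0 by_.
pose F s := - (2^-1 * expint_primitive (y - s)).
have dF s : s < y -> is_derive s 1 F (Ekernel (y - s)).
  move=> sy; have ys0 : 0 < y - s by rewrite subr_gt0.
  have dB : is_derive s 1 (fun s => y - s) (-1).
    have := is_deriveB (is_derive_cst y s 1) (is_derive_id s 1).
    by rewrite sub0r.
  have dP := is_derive1_comp (f := expint_primitive) (g := fun s => y - s)
    (is_derive_expint_primitive ys0) dB.
  apply: is_derive_eq (is_deriveN (is_deriveZ (2^-1) dP)) _.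
  by rewrite /GRing.scale/= mulrN1 mulrN opprK Ekernel_expint gtr0_norm.
have sb_y s : s \in `[0%R, b] -> s < y by rewrite in_itv/= => /andP[_ /le_lt_trans]; apply.
rewrite (@continuous_FTC2 _ (fun s => Ekernel (y - s)) F 0 b b0).
- by rewrite /F subr0 -EFinB opprK addrC -mulrBr.
- apply: continuous_in_subspaceT => s /[1!inE] /sb_y sy.
  by apply: continuous_Ekernel_shift; rewrite lt_eqF.
- by apply: derivable_cc_LRcontinuous (ltW b0) _ => s /sb_y /dF [].
- move=> s s0b; apply: derive1_val; apply: dF; apply: sb_y.
  by rewrite in_itv/=; move: s0b; rewrite in_itv/= => /andP[/ltW -> /ltW ->].
Qed.

Lemma expint_primitive_shift_cvgy (y : R) :
  expint_primitive (s - y) @[s --> +oo] --> 0.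
Proof.
have expR_shift : - expR (- (s - y)) @[s --> +oo] --> (0 : R).
  under eq_fun do rewrite opprB addrC expRD.
  rewrite -oppr0 -(mul0r (expR y)); apply: cvgN; apply: cvgMr_tmp.
  exact: (@cvgr_expR R).
apply: squeeze_cvgr expR_shift (cvg_cst 0).
near=> s; have ys : y < s by near: s; apply: nbhs_pinfty_gt; exact: num_real.
rewrite expint_primitive_ge ?subr_ge0 ?(ltW ys)//.
by rewrite expint_primitive_le0// subr_gt0.
Unshelve. all: by end_near. Qed.

Lemma integral_Ekernel_right (y a : R) : y < a ->
  (\int[mu]_(s in `[a, +oo[) (Ekernel (y - s))%:E =
   (- (2^-1 * expint_primitive (a - y)))%:E)%E.
Proof.
move=> ya.
pose F s := 2^-1 * expint_primitive (s - y).
have dF s : y < s -> is_derive s 1 F (Ekernel (y - s)).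
  move=> ys; have sy0 : 0 < s - y by rewrite subr_gt0.
  have dB : is_derive s 1 (fun s => s - y) 1.
    have := is_deriveB (is_derive_id s 1) (is_derive_cst y s 1).
    by rewrite subr0.
  have dP := is_derive1_comp (f := expint_primitive) (g := fun s => s - y)
    (is_derive_expint_primitive sy0) dB.
  apply: is_derive_eq (is_deriveZ (2^-1) dP) _.
  by rewrite /GRing.scale/= mulr1 Ekernel_expint distrC gtr0_norm.
have as_y s : a <= s -> y < s by move/(lt_le_trans ya).
rewrite (@ge0_continuous_FTC2y _ (fun s => Ekernel (y - s)) F a 0).
- by rewrite -EFinB sub0r.
- by move=> s _; exact: Ekernel_ge0.
- apply: continuous_in_subspaceT => s; rewrite inE/= in_itv/= andbT => /as_y ys.
  by apply: continuous_Ekernel_shift; rewrite gt_eqF.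
- by rewrite -(mulr0 (2^-1 : R)); apply: cvgMl_tmp; exact: expint_primitive_shift_cvgy.
- by move=> s /ltW /as_y /dF [].
- by apply/cvg_at_right_filter/derivable1_continuous; case: (dF a ya).
- by move=> s /[!in_itv]/= /andP[/ltW /as_y /dF /derive1_val].
Qed.

(* The kernel s |-> E(y - s) has a logarithmic singularity at s = y, so its
   integral over [0, +oo[ is taken as a limit over sets avoiding y. *)
Definition punctured_exhaustion (y : R) (n : nat) : set R :=
  `[0%R, y - y / n.+2%:R] `|` `[y + y / n.+2%:R, +oo[.

Lemma punctured_exhaustion_nondecreasing (y : R) : 0 <= y ->
  {homo punctured_exhaustion y : n m / (n <= m)%N >-> (n <= m)%O}.
Proof.
move=> y0 n m nm; have le_nm : y / m.+2%:R <= y / n.+2%:R.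
  by rewrite ler_wpM2l// lef_pV2 ?posrE ?ltr0n// ler_nat !ltnS.
rewrite subsetEset /punctured_exhaustion.
move: le_nm; set dm := y / m.+2%:R; set dn := y / n.+2%:R => le_nm.
move=> s /=; rewrite !in_itv/= !andbT => -[/andP[s0 sy]|ys]; [left; rewrite s0/=|right]; lra.
Qed.

Lemma bigcup_punctured_exhaustion (y : R) : 0 < y ->
  \bigcup_n punctured_exhaustion y n = `[0%R, +oo[ `\ y.
Proof.
move=> y0; apply/seteqP; split => s.
  move=> [n _]; rewrite /punctured_exhaustion; set dn := y / n.+2%:R.
  have dn0 : 0 < dn by rewrite divr_gt0.
  by rewrite /= !in_itv/= !andbT => -[/andP[s0 sy]|ys]; split=> [|sy']; lra.
rewrite /= in_itv/= andbT => -[s0 /eqP ys].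
have sy0 : 0 < `|s - y| by rewrite normr_gt0 subr_eq0.
exists (Num.truncn (y / `|s - y|)) => //; rewrite /punctured_exhaustion.
set dn := y / _.+2%:R; have : dn <= `|s - y|.
  rewrite ler_pdivrMr ?ltr0n// -ler_pdivrMl// mulrC.
  by apply: (le_trans (ltW (truncnS_gt _))); rewrite ler_nat.
have [sy'|ys'] := ltP s y.
  by rewrite ltr0_norm ?subr_lt0// => ?; left; rewrite /= in_itv/= s0/=; lra.
by rewrite ger0_norm ?subr_ge0// => ?; right; rewrite /= in_itv/= andbT; lra.
Qed.

Lemma integral_Ekernel_le (y : R) : 0 < y ->
  (\int[mu]_(s in `[0%R, +oo[ `\ y) (Ekernel (y - s))%:E <=
   (1 + 2^-1 * expint_primitive y)%:E)%E.
Proof.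
move=> y0; rewrite -bigcup_punctured_exhaustion//.
have sub_y n : punctured_exhaustion y n `<=` [set~ y].
  move=> s Sns; have : (\bigcup_n punctured_exhaustion y n) s by exists n.
  by rewrite bigcup_punctured_exhaustion// => -[].
have mS n : measurable (punctured_exhaustion y n) by exact: measurableU.
have mK n : measurable_fun (punctured_exhaustion y n) (fun s => (Ekernel (y - s))%:E).
  apply: (measurable_funS (E := [set~ y])) => //; first exact: measurableC.
  exact: measurable_Ekernel_shift.
apply: (@ge0_nondecreasing_set_integral_le _ (measurableTypeR R)) => //.
- exact: punctured_exhaustion_nondecreasing (ltW y0).
- by move=> n s _; rewrite lee_fin Ekernel_ge0.
move=> n; rewrite /punctured_exhaustion; set dn := y / n.+2%:R.
have dn0 : 0 < dn by rewrite divr_gt0.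
have dny : dn < y by rewrite ltr_pdivrMr// ltr_pMr// ltr1n.
rewrite ge0_integral_setU//; last 3 first.
- exact: mK.
- by move=> s _; rewrite lee_fin Ekernel_ge0.
- rewrite disj_set2E; apply/eqP/seteqP; split => s //=.
  by rewrite !in_itv/= andbT => -[/andP[_ sy] ys]; lra.
rewrite integral_Ekernel_left ?subr_gt0 ?ltrBlDr ?ltrDl//.
rewrite integral_Ekernel_right ?ltrDl// -EFinD lee_fin.
have -> : y - (y - dn) = dn by rewrite opprB addrC subrK.
have -> : y + dn - y = dn by rewrite addrAC subrr add0r.
have := expint_primitive_ge (ltW dn0).
have : expR (- dn) <= 1 by rewrite expR_le1 oppr_le0 ltW.
lra.
Qed.

Lemma Eterm_le (TM : R) (f : R -> R) (y : R) : 0 < y ->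
  (forall s, 0 < s -> {for s, continuous f}) ->
  (forall s, 0 <= s -> 0 <= f s <= TM) ->
  (Eterm f y <= (TM ^+ 4 * (1 + 2^-1 * expint_primitive y))%:E)%E.
Proof.
move=> y0 cf fb; set D := `[0%R, +oo[ `\ y.
have TM0 : 0 <= TM by case/andP: (fb 0 (lexx 0)); exact: le_trans.
have mD : measurable D by exact: measurableD.
have mf4 : measurable_fun (`[0%R, +oo[ : set R) (fun s => f s ^+ 4).
  rewrite -(@setU1itv _ _ _ _ false)// measurable_funU//.
  split; first exact: measurable_fun_set1.
  apply: open_continuous_measurable_fun; first exact: interval_open.
  move=> s; rewrite inE/= in_itv/= andbT => s0.
  have f4 := @exprn_continuous R 4 (f s).
  exact: (@continuous_comp _ _ _ f (fun x => x ^+ 4) s (cf s s0) f4).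
have mK : measurable_fun D (fun s => Ekernel (y - s)).
  apply: (measurable_funS (E := [set~ y])) => //; first exact: measurableC.
  - by move=> s [].
  - by apply/measurable_EFinP; exact: measurable_Ekernel_shift.
have mKf : measurable_fun D (fun s => (Ekernel (y - s) * f s ^+ 4)%:E).
  apply/measurable_EFinP/measurable_funM => //.
  by apply: measurable_funS mf4 => // s [].
rewrite /Eterm -(@integral_setD1 _ _ y)//.
apply: (@le_trans _ _ (\int[mu]_(s in D) ((TM ^+ 4)%:E * (Ekernel (y - s))%:E))%E).
  apply: ge0_le_integral => //.
  - move=> s [/= /[!in_itv]/= /[!andbT] s0 _].
    by rewrite lee_fin mulr_ge0 ?Ekernel_ge0// exprn_ge0//; case/andP: (fb s s0).
  - exact/measurable_funeM/measurable_EFinP.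
  - move=> s [/= /[!in_itv]/= /[!andbT] s0 _].
    rewrite -EFinM lee_fin mulrC ler_wpM2r ?Ekernel_ge0//.
    by case/andP: (fb s s0) => f0 fT; rewrite lerXn2r.
rewrite ge0_integralZl_EFin ?exprn_ge0//.
- have TM4 : (0 <= (TM ^+ 4)%:E)%E by rewrite lee_fin exprn_ge0.
  by have := lee_wpmul2l TM4 (integral_Ekernel_le y0); rewrite -EFinM; apply.
- by move=> s _; rewrite lee_fin Ekernel_ge0.
- exact/measurable_EFinP.
Qed.

End Kernel.

Section Solution.
Context {R : realType}.
Variables (c TM : R) (f : R -> R).
Hypothesis TM_gt0 : 0 < TM.
Hypothesis c_gt0 : 0 < c.
Hypothesis f_C2 : forall y, 0 < y ->
  derivable f y 1 /\ derivable (derive1 f) y 1 /\ {for y, continuous (derive1n 2 f)}.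
Hypothesis f_eq : forall y, 0 < y ->
  ((derive1n 2 f y - c * derive1 f y - f y ^+ 4)%:E = - Eterm f y)%E.
Hypothesis f_bounds : forall y, 0 <= y -> 0 <= f y <= TM.

Let f_continuous y : 0 < y -> {for y, continuous f}.
Proof. by move=> y0; case: (f_C2 y0) => /derivable1_continuous. Qed.

Lemma solution_derive2_ge (y : R) : 0 < y ->
  c * derive1 f y + f y ^+ 4 - TM ^+ 4 + 2^-1 * (TM ^+ 4 * expint (y + 1))
    <= derive1n 2 f y.
Proof.
move=> y0; have := Eterm_le y0 f_continuous f_bounds.
rewrite -[Eterm f y]oppeK -f_eq// -EFinN lee_fin.
have : TM ^+ 4 * expint_primitive y <= TM ^+ 4 * - expint (y + 1).
  by rewrite ler_wpM2l ?exprn_ge0 ?(ltW TM_gt0) ?expint_primitive_le.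
lra.
Qed.

Lemma solution_not_right_gt (a : R) : 0 <= a -> f a = TM ->
  ~ \forall t \near a^'+, f a < f t.
Proof.
move=> a0 faT near_gt; near a^'+ => t.
have at_ : a < t by near: t; exact: nbhs_right_gt.
have : f a < f t by near: t; exact: near_gt.
case/andP: (f_bounds (le_trans a0 (ltW at_))) => _ fT.
by rewrite faT => /lt_le_trans/(_ fT); rewrite ltxx.
Unshelve. all: by end_near. Qed.

Lemma solution_lt_bound (y : R) : 0 < y -> f y < TM.
Proof.
move=> y0; rewrite lt_neqAle; case/andP: (f_bounds (ltW y0)) => _ ->; rewrite andbT.
apply/negP => /eqP fyT; have [_ [df1y cf2y]] := f_C2 y0.
have f1y : derive1 f y = 0.
  apply: derive1_val; apply: (@derive1_at_max _ f 0 (y + 1)); first lra.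
  - by move=> t /[!in_itv]/= /andP[t0 _]; case: (f_C2 t0).
  - by rewrite in_itv/=; apply/andP; split; lra.
  - by move=> t /[!in_itv]/= /andP[t0 _]; rewrite fyT; case/andP: (f_bounds (ltW t0)).
have f2y : 0 < derive1n 2 f y.
  apply: lt_le_trans (solution_derive2_ge y0).
  rewrite f1y fyT mulr0 add0r subrr add0r.
  by rewrite !pmulr_rgt0 ?invr_gt0 ?exprn_gt0// expint_gt0//; lra.
have f1_lim : derive1 f x @[x --> y^'+] --> 0.
  by have := cvg_at_right_filter (derivable1_continuous df1y); rewrite f1y.
apply: (solution_not_right_gt (ltW y0) fyT).
apply: gtr0_derive2_right_lt (lexx 0) _ f1_lim (cvg_at_right_filter (f_continuous y0)).
apply: cvg_within; near=> t; have t0 : 0 < t by near: t; exact: lt_nbhsr.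
have [df1 [df2 _]] := f_C2 t0; split; [exact: df1 | exact: df2 |].
by near: t; exact: (cvgr_gt _ cf2y _ f2y).
Unshelve. all: by end_near. Qed.

Lemma solution_right_slope_lt0 (l : R) :
  f x @[x --> 0^'+] --> f 0 -> f 0 = TM -> derive1 f x @[x --> 0^'+] --> l -> l < 0.
Proof.
move=> f_right f0 f1l; rewrite ltNge; apply/negP => l0.
set kappa := expint (2 : R); have kappa0 : 0 < kappa by rewrite expint_gt0.
set h := fun t => c * derive1 f t + f t ^+ 4 - TM ^+ 4 + 2^-1 * (TM ^+ 4 * kappa).
have h_lim : h x @[x --> 0^'+] --> c * l + TM ^+ 4 - TM ^+ 4 + 2^-1 * (TM ^+ 4 * kappa).
  apply: cvgD; last exact: cvg_cst.
  apply: cvgB; last exact: cvg_cst.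
  apply: cvgD; first exact: cvgMl_tmp.
  by rewrite -f0; exact: (cvg_comp _ _ f_right (@exprn_continuous R 4 (f 0))).
have h_lim_gt0 : 0 < c * l + TM ^+ 4 - TM ^+ 4 + 2^-1 * (TM ^+ 4 * kappa).
  have : 0 < 2^-1 * (TM ^+ 4 * kappa) by rewrite !pmulr_rgt0 ?invr_gt0 ?exprn_gt0.
  by have := mulr_ge0 (ltW c_gt0) l0; lra.
apply: (solution_not_right_gt (lexx 0) f0).
apply: gtr0_derive2_right_lt l0 _ f1l f_right.
near=> t; have t0 : 0 < t by near: t; exact: nbhs_right_gt.
have [df1 [df2 _]] := f_C2 t0; split; [exact: df1 | exact: df2 |].
apply: lt_le_trans (solution_derive2_ge t0).
apply: (@lt_le_trans _ _ (h t)); first by near: t; exact: (cvgr_gt _ h_lim _ h_lim_gt0).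
rewrite /h lerD2l; apply: ler_wpM2l; first by rewrite invr_ge0.
apply: ler_wpM2l; first by rewrite exprn_ge0// ltW.
have t1 : t < 1 by near: t; exact: nbhs_right_lt.
by apply/ltW/expint_decr; lra.
Unshelve. all: by end_near. Qed.

End Solution.

Theorem lemma2p4 (R : realType) (TM c : R) (f : R -> R) :
  0 < TM -> 0 < c ->
  (* f in C^2(R_+): C^2 on ]0,+oo[, with f, f', f'' extending continuously to 0 *)
  (forall y, 0 < y -> derivable f y 1 /\ derivable (derive1 f) y 1 /\
                      {for y, continuous (derive1n 2 f)}) ->
  f x @[x --> 0^'+] --> f 0 ->
  cvg ((derive1 f) x @[x --> 0^'+]) ->
  cvg ((derive1n 2 f) x @[x --> 0^'+]) ->
  (* the equation on y > 0 *)
  (forall y, 0 < y ->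
     (((derive1n 2 f) y - c * (derive1 f) y - f y ^+ 4)%:E = - Eterm f y)%E) ->
  f 0 = TM ->
  (forall y, 0 <= y -> 0 <= f y) ->
  (forall y, 0 <= y -> `|f y| <= TM) ->
  (forall y, 0 < y -> f y < TM) /\
  (exists l : R, l < 0 /\ (derive1 f) x @[x --> 0^'+] --> l).
Proof.
move=> TM0 c0 f_C2 f_right f1_cvg _ f_eq f0 f_ge0 f_le.
have f_bounds y : 0 <= y -> 0 <= f y <= TM.
  by move=> y0; rewrite f_ge0//= (le_trans (ler_norm _)) ?f_le.
split=> [y y0|]; first exact: (solution_lt_bound TM0 f_C2 f_eq f_bounds y0).
exists (lim (derive1 f x @[x --> 0^'+])); split; last exact: f1_cvg.
exact: (solution_right_slope_lt0 TM0 c0 f_C2 f_eq f_bounds f_right f0 f1_cvg).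
Qed.
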